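(* Let $d,H\in\mathbb{N}$ and $0\le a\le b\le1$. Consider an arbitrary sequence of cost functions $\ell_t:\mathcal{X}_{d,H,a,b}\to\mathbb{R}$ which are convex and $L$-Lipschitz with respect to $\|\cdot\|_{d,H}$. Then the iterates $z_t=(p_t,M_t^{[1:H]})$ of Lazy Mirror Descent on $\mathcal{X}_{d,H,a,b}$ with step size $\eta=\sqrt{2dH\ln(d)}/(L\sqrt T)$, regularizer $R_{d,H}$ and losses $\ell_1,\dots,\ell_T$ satisfy $$\sum_{t=1}^T\ell_t(p_t,M_t^{[1:H]})-\min_{(p,M^{[1:H]})\in\mathcal{X}_{d,H,a,b}}\sum_{t=1}^T\ell_t(p,M^{[1:H]})\le L\sqrt{32dH\ln(d)\cdot T}.$$ Moreover, with $\beta:=\sqrt{2dH\ln(d)}/\sqrt T$, for all $t\in[T-1]$ we have $\|p_t-p_{t+1}\|_1\le\beta$ and $\max_{h\in[H]}\|M_t^{[h]}-M_{t+1}^{[h]}\|_{1\to1}\le\beta$.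
   Context: $\Delta^d_a:=a\Delta^d$ (scaled probability simplex), $\mathbb{S}^d_a:=\{aM:M\text{ a }d\times d\text{ column-stochastic matrix}\}$, and $\mathcal{X}_{d,H,a,b}:=\bigcup_{a'\in[a,b]}\Delta^d_{a'}\times(\mathbb{S}^d_{a'})^H\subset\mathbb{R}^d\times(\mathbb{R}^{d\times d})^H\cong\mathbb{R}^{d+Hd^2}$. Norm: $\|(p,M^{[1:H]})\|_{d,H}^2:=\|p\|_1^2+\sum_{h=1}^H\sum_{j=1}^d\|M^{[h]}_{\cdot,j}\|_1^2$, where $M_{\cdot,j}$ is the $j$-th column; $\|M\|_{1\to1}:=\sup_{\|x\|_1=1}\|Mx\|_1$. For $v\in\mathbb{R}^d_{\ge0}$ with $\sum_jv_j\le1$, $v^c:=1-\sum_jv_j$ and $\mathrm{Ent}(v):=v^c\ln\frac1{v^c}+\sum_jv_j\ln\frac1{v_j}$; $R_{d,H}(p,M^{[1:H]}):=-\mathrm{Ent}(p)-\sum_{h=1}^H\sum_{j=1}^d\mathrm{Ent}(M^{[h]}_{\cdot,j})$. Lazy Mirror Descent outputs $z_t:=\arg\min_{z\in\mathcal{X}}\sum_{s=1}^{t-1}\langle z,\nabla\ell_s(z_s)\rangle+\frac1\eta R_{d,H}(z)$ at step $t$, then receives $\ell_t$. *)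

From HB Require Import structures.
From mathcomp Require Import all_boot all_order all_algebra.
From mathcomp Require Import all_classical all_reals.
From mathcomp Require Import exp.
Set Implicit Arguments. Unset Strict Implicit. Unset Printing Implicit Defensive.
Import Order.TTheory GRing.Theory Num.Theory.
Local Open Scope ring_scope.
Local Open Scope classical_set_scope.

(* A point (p, M^[1:H]) of R^d x (R^{d x d})^H.  p is a column vector,
   M is a finite family of H square matrices (index h : 'I_H stands for h+1). *)
Notation mdpoint R d H := ('cV[R]_d * {ffun 'I_H -> 'M[R]_d})%type.

Section Defs.
Variable R : realType.

Definition norm1 {d} (v : 'cV[R]_d) : R := \sum_i `|v i 0|.

Definition opnorm11 {d} (M : 'M[R]_d) : R :=
  sup [set r | exists x : 'cV[R]_d, norm1 x = 1 /\ r = norm1 (M *m x)].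

Definition normdH {d H} (z : mdpoint R d H) : R :=
  Num.sqrt (norm1 z.1 ^+ 2 + \sum_(h < H) \sum_(j < d) norm1 (col j (z.2 h)) ^+ 2).

Definition dotp {d H} (z g : mdpoint R d H) : R :=
  \sum_(i < d) z.1 i 0 * g.1 i 0 +
  \sum_(h < H) \sum_(i < d) \sum_(j < d) z.2 h i j * g.2 h i j.

Definition in_sdelta {d} (a' : R) (p : 'cV[R]_d) : Prop :=
  (forall i, 0 <= p i 0) /\ \sum_i p i 0 = a'.

Definition in_sstoch {d} (a' : R) (M : 'M[R]_d) : Prop :=
  forall j, in_sdelta a' (col j M).

Definition inX {d H} (a b : R) (z : mdpoint R d H) : Prop :=
  exists a', a <= a' <= b /\ in_sdelta a' z.1 /\ forall h, in_sstoch a' (z.2 h).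

Definition xln1x (x : R) : R := if x == 0 then 0 else x * ln x^-1.

Definition Ent {d} (v : 'cV[R]_d) : R :=
  xln1x (1 - \sum_i v i 0) + \sum_i xln1x (v i 0).

Definition RdH {d H} (z : mdpoint R d H) : R :=
  - Ent z.1 - \sum_(h < H) \sum_(j < d) Ent (col j (z.2 h)).

Definition convex_on {d H} (a b : R) (f : mdpoint R d H -> R) : Prop :=
  forall x y (lam : R), inX a b x -> inX a b y -> 0 <= lam <= 1 ->
    f (lam *: x + (1 - lam) *: y) <= lam * f x + (1 - lam) * f y.

Definition lipschitz_on {d H} (a b L : R) (f : mdpoint R d H -> R) : Prop :=
  forall x y, inX a b x -> inX a b y -> `|f x - f y| <= L * normdH (x - y).

Definition subgrad_on {d H} (a b : R) (f : mdpoint R d H -> R) (z g : mdpoint R d H) : Prop :=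
  forall y, inX a b y -> f z + dotp g (y - z) <= f y.

(* dual-norm bound ||g||_* <= L for the dual of ||.||_{d,H} *)
Definition dual_bound {d H} (L : R) (g : mdpoint R d H) : Prop :=
  forall x, dotp g x <= L * normdH x.

(* Lazy Mirror Descent: for 1 <= t <= T, z t is a minimizer over X of
   sum_{s=1}^{t-1} <z, g s> + (1/eta) R_{d,H}(z), where g s is the (sub)gradient
   of loss s at z s. *)
Definition lazy_md {d H} (a b eta : R) (T : nat) (g z : nat -> mdpoint R d H) : Prop :=
  forall t, (1 <= t <= T)%N ->
    inX a b (z t) /\
    forall y, inX a b y ->
      \sum_(1 <= s < t) dotp (z t) (g s) + eta^-1 * RdH (z t)
      <= \sum_(1 <= s < t) dotp y (g s) + eta^-1 * RdH y.

End Defs.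

From HB Require Import structures.
From mathcomp Require Import all_boot all_order all_algebra.
From mathcomp Require Import all_classical all_reals.
From mathcomp Require Import exp topology normedtype derive realfun.
From mathcomp Require Import ring lra zify.
Set Implicit Arguments. Unset Strict Implicit. Unset Printing Implicit Defensive.
Import Order.TTheory GRing.Theory Num.Theory.
Import numFieldNormedType.Exports.
Local Open Scope ring_scope.

(* Lazy mirror descent is follow-the-regularized-leader with regularizer
   R_{d,H}/eta.  By Pinsker's inequality the entropy of a subprobability vector
   is 1-strongly concave for the l1 norm, so R_{d,H} is 1-strongly convex for
   ||.||_{d,H} on X_{d,H,a,b}; letting lam -> 0 in the strong convexity
   inequality between the minimizer z_t and lam y + (1 - lam) z_t shows that
   the t-th objective exceeds its minimum at y by ||y - z_t||^2 / (2 eta).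
   Comparing the objectives of rounds t and t+1 with the dual bound
   ||g_t||_* <= L gives the stability ||z_t - z_{t+1}|| <= eta L, and the
   one-step "be-the-leader" inequality with error eta L^2 / 2.  Telescoping,
   the range (1 + dH) ln(d+1) of -R_{d,H}, and the subgradient inequality bound
   the regret by (1 + dH) ln(d+1) / eta + T eta L^2 / 2 <= L sqrt(32 dH ln(d) T).
   The changes of p_t and of each M_t^[h] are bounded by the change of z_t in
   ||.||_{d,H}, since the 1->1 norm of a matrix is at most its largest column
   l1 norm. *)

Section Pinsker.
Variable R : realType.

Lemma is_derive_ln1m (x : R) : x < 1 -> is_derive x 1 (fun y => ln (1 - y)) (- (1 - x)^-1).
Proof.
move=> x1; rewrite -mulrN1.
have dln : is_derive (1 - x) 1 (@ln R) (1 - x)^-1 by apply: is_derive1_ln; rewrite subr_gt0.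
have d1m : is_derive x 1 (fun y : R => 1 - y) (-1).
  by apply: is_derive_eq; rewrite add0r mul1r.
exact: (@is_derive1_comp R (@ln R) (fun y => 1 - y) x _ _ dln d1m).
Qed.

Lemma derive_le0_le (f df : R -> R) (u v : R) : u <= v ->
  (forall x, u <= x <= v -> is_derive x 1 f (df x)) ->
  (forall x, u < x < v -> df x <= 0) -> f v <= f u.
Proof.
move=> uv fdf df_le0.
have u_in : u \in `[u, v] by rewrite in_itv /= lexx uv.
have v_in : v \in `[u, v] by rewrite in_itv /= lexx uv.
have oo_cc x : x \in `]u, v[ -> u <= x <= v.
  by rewrite in_itv /= => /andP[/ltW -> /ltW ->].
apply: (@ler0_derive1_le_cc R f u v) => //.
- by move=> x /oo_cc /fdf dfx; apply: ex_derive.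
- move=> x xuv; have dfx := fdf x (oo_cc x xuv).
  by rewrite derive1E derive_val df_le0 -?in_itv.
- apply: derivable_within_continuous => x.
  by rewrite in_itv /= => /fdf dfx; apply: ex_derive.
Qed.

Lemma binary_pinsker_lt1 (p q : R) : 0 < q -> q <= p -> p < 1 ->
  2 * (p - q) ^+ 2 <= p * ln (p / q) + (1 - p) * ln ((1 - p) / (1 - q)).
Proof.
move=> q0 qp p1.
pose gap (x : R) := p * ln p - p * ln x + (1 - p) * ln (1 - p) - (1 - p) * ln (1 - x)
  - 2 * (p - x) ^+ 2.
have gap_derive x : q <= x <= p ->
    is_derive x 1 gap (- p / x + (1 - p) / (1 - x) + 4 * (p - x)).
  case/andP=> qx xp; have x0 : 0 < x by exact: lt_le_trans qx.
  have dln := is_derive1_ln x0.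
  have dln1m := @is_derive_ln1m x (le_lt_trans xp p1).
  by apply: is_derive_eq; rewrite -![_ *: _]/(_ * _); ring.
have : gap p <= gap q.
  apply: derive_le0_le gap_derive _ => // x /andP[qx xp].
  have x0 : 0 < x by exact: lt_trans qx.
  have x1 : x < 1 by exact: lt_trans p1.
  have -> : - p / x + (1 - p) / (1 - x) + 4 * (p - x)
      = (x - p) * (1 - 2 * x) ^+ 2 / (x * (1 - x)).
    by field; rewrite subr_eq0 !gt_eqF.
  rewrite pmulr_lle0 ?invr_gt0 ?mulr_gt0 ?subr_gt0 //.
  by rewrite mulr_le0_ge0 ?sqr_ge0 // subr_le0 ltW.
rewrite /gap !ln_div ?posrE ?subr_gt0 ?(lt_le_trans q0) ?(le_lt_trans qp) //.
lra.
Qed.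

Lemma binary_pinsker1 (q : R) : 0 < q -> q <= 1 -> 2 * (1 - q) ^+ 2 <= ln (1 / q).
Proof.
move=> q0 q1.
pose gap (x : R) := - ln x - 2 * (1 - x) ^+ 2.
have gap_derive x : q <= x <= 1 -> is_derive x 1 gap (- x^-1 + 4 * (1 - x)).
  case/andP=> qx _; have dln := is_derive1_ln (lt_le_trans q0 qx).
  by apply: is_derive_eq; rewrite -![_ *: _]/(_ * _); ring.
have : gap 1 <= gap q.
  apply: derive_le0_le gap_derive _ => // x /andP[qx _].
  have x0 : 0 < x by exact: lt_trans qx.
  have -> : - x^-1 + 4 * (1 - x) = - ((1 - 2 * x) ^+ 2 / x) by field; rewrite gt_eqF.
  by rewrite oppr_le0 divr_ge0 ?sqr_ge0 ?ltW.
rewrite /gap ln_div ?posrE // ln1; lra.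
Qed.

Lemma binary_pinsker (p q : R) : 0 <= q -> q <= p -> p <= 1 -> (0 < p -> 0 < q) ->
  2 * (p - q) ^+ 2 <= p * ln (p / q) + (1 - p) * ln ((1 - p) / (1 - q)).
Proof.
move=> q0 qp p1 pq.
have [p_eq0|p_neq0] := eqVneq p 0.
  have q_eq0 : q = 0 by apply/eqP; rewrite eq_le q0 -p_eq0 qp.
  by rewrite p_eq0 q_eq0 !subr0 divr1 ln1 expr0n /= !mulr0 mul0r addr0.
have {}q0 : 0 < q by apply: pq; rewrite lt_neqAle eq_sym p_neq0 (le_trans q0).
have [->|p_neq1] := eqVneq p 1.
  by rewrite subrr mul0r addr0 mul1r binary_pinsker1 ?(le_trans qp).
by apply: binary_pinsker_lt1; rewrite // lt_neqAle p_neq1.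
Qed.

Lemma ln_le_subr1 (x : R) : 0 < x -> ln x <= x - 1.
Proof. by move=> x0; have := @le_ln1Dx R (x - 1); rewrite [1 + _]addrC subrK; apply; lra. Qed.

Lemma ln_ge_1mV (x : R) : 0 < x -> 1 - x^-1 <= ln x.
Proof.
by move=> x0; have := @ln_le_subr1 x^-1; rewrite lnV ?posrE // invr_gt0 => /(_ x0); lra.
Qed.

Lemma mul_ln_div_ge (a b c : R) : 0 <= a -> 0 <= b -> (0 < a -> 0 < b) -> 0 < c ->
  a * ln c + a - b * c <= a * ln (a / b).
Proof.
move=> a0 b0 ab c0; have [->|a_neq0] := eqVneq a 0.
  by rewrite !mul0r add0r sub0r oppr_le0 mulr_ge0 // ltW.
have {}a0 : 0 < a by rewrite lt_neqAle eq_sym a_neq0.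
have {}b0 := ab a0.
have := @ln_ge_1mV (a / b / c); rewrite !ln_div ?posrE ?divr_gt0 // => /(_ isT).
rewrite -(ler_pM2l a0) (_ : a * (1 - _^-1) = a - b * c); last first.
  by field; rewrite !gt_eqF.
lra.
Qed.

Section LogSum.
Variables (I : finType) (P : pred I) (a b : I -> R).
Hypotheses (a_ge0 : forall i, P i -> 0 <= a i) (b_ge0 : forall i, P i -> 0 <= b i).
Hypothesis a_dom_b : forall i, P i -> 0 < a i -> 0 < b i.

Lemma psumr_gt0_dom : 0 < \sum_(i | P i) a i -> 0 < \sum_(i | P i) b i.
Proof.
rewrite !lt_def !sumr_ge0 // !andbT; apply: contra_neq => /(psumr_eq0P b_ge0) b_eq0.
apply: big1 => i Pi; apply/eqP; rewrite eq_le a_ge0 // andbT leNgt.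
by apply/negP => /(a_dom_b Pi); rewrite b_eq0 // ltxx.
Qed.

Lemma log_sum_ineq :
  (\sum_(i | P i) a i) * ln ((\sum_(i | P i) a i) / \sum_(i | P i) b i)
  <= \sum_(i | P i) a i * ln (a i / b i).
Proof.
set A := \sum_(i | P i) a i; set B := \sum_(i | P i) b i.
have [A_eq0|A_neq0] := eqVneq A 0.
  by rewrite A_eq0 mul0r sumr_ge0 // => i Pi; rewrite (psumr_eq0P a_ge0 A_eq0) ?mul0r.
have A_gt0 : 0 < A by rewrite lt_def A_neq0 sumr_ge0.
have B_gt0 : 0 < B by exact: psumr_gt0_dom.
apply: le_trans (_ : \sum_(i | P i) (a i * ln (A / B) + a i - b i * (A / B)) <= _).
  rewrite !big_split /= -!mulr_suml sumrN -/A -/B.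
  by rewrite -mulr_suml -/B [B * _]mulrC divfK ?gt_eqF // addrK.
by apply: ler_sum => i Pi; rewrite mul_ln_div_ge ?divr_gt0 //;
  [apply: a_ge0 | apply: b_ge0 | apply: a_dom_b].
Qed.
End LogSum.

Lemma pinsker (I : finType) (y m : I -> R) :
  (forall i, 0 <= y i) -> (forall i, 0 <= m i) -> (forall i, 0 < y i -> 0 < m i) ->
  \sum_i y i = 1 -> \sum_i m i = 1 ->
  (\sum_i `|y i - m i|) ^+ 2 / 2 <= \sum_i y i * ln (y i / m i).
Proof.
move=> y_ge0 m_ge0 y_dom_m Sy Sm.
pose A := [pred i | m i <= y i].
have logsum (Q : pred I) := @log_sum_ineq I Q y m (fun i _ => y_ge0 i) (fun i _ => m_ge0 i)
  (fun i _ => y_dom_m i).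
rewrite (bigID A) [X in _ <= X](bigID A) /=.
rewrite (bigID A) /= in Sy; rewrite (bigID A) /= in Sm.
set Py := \sum_(i | A i) y i in Sy logsum *; set Pm := \sum_(i | A i) m i in Sm logsum *.
have -> : \sum_(i | A i) `|y i - m i| = Py - Pm.
  by rewrite -sumrB; apply: eq_bigr => i Ai; rewrite ger0_norm // subr_ge0.
set Ny := \sum_(i | ~~ A i) y i in Sy logsum *.
set Nm := \sum_(i | ~~ A i) m i in Sm logsum *.
have -> : \sum_(i | ~~ A i) `|y i - m i| = Nm - Ny.
  rewrite -sumrB; apply: eq_bigr => i Ai.
  by rewrite ler0_norm ?opprB // subr_le0 ltW // ltNge.
have Pm_ge0 : 0 <= Pm by rewrite sumr_ge0.
have Ny_ge0 : 0 <= Ny by rewrite sumr_ge0.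
have Pm_le_Py : Pm <= Py by rewrite ler_sum.
have Py_dom_Pm : 0 < Py -> 0 < Pm.
  exact: psumr_gt0_dom (fun i _ => y_ge0 i) (fun i _ => m_ge0 i) (fun i _ => y_dom_m i).
have Py_le1 : Py <= 1 by lra.
have := @binary_pinsker Py Pm Pm_ge0 Pm_le_Py Py_le1 Py_dom_Pm.
have := logsum A; have := logsum (predC A); rewrite /= -/Py -/Pm -/Ny -/Nm.
have -> : Ny = 1 - Py by lra.
have -> : Nm = 1 - Pm by lra.
lra.
Qed.
End Pinsker.

Section Entropy.
Variable R : realType.

Lemma xln1xE (x : R) : 0 <= x -> xln1x x = - (x * ln x).
Proof.
rewrite /xln1x; have [->|x_neq0 x_ge0] := eqVneq x 0; first by rewrite mul0r oppr0.
by rewrite lnV ?mulrN // posrE lt_def x_neq0.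
Qed.

Lemma mul_ln_divE (y m : R) : 0 <= y -> (0 < y -> 0 < m) ->
  y * ln (y / m) = y * ln y - y * ln m.
Proof.
have [->|y_neq0 y_ge0 y_dom_m] := eqVneq y 0; first by rewrite !mul0r subrr.
have y_gt0 : 0 < y by rewrite lt_def y_neq0.
by rewrite ln_div ?posrE ?y_dom_m // mulrBr.
Qed.

Lemma xln1x_mix_gap (lam y z : R) : 0 < lam < 1 -> 0 <= y -> 0 <= z ->
  let m := lam * y + (1 - lam) * z in
  xln1x m - lam * xln1x y - (1 - lam) * xln1x z =
  lam * (y * ln (y / m)) + (1 - lam) * (z * ln (z / m)).
Proof.
move=> /andP[lam0 lam1] y0 z0 m.
have lam1' : 0 < 1 - lam by rewrite subr_gt0.
have m0 : 0 <= m by rewrite addr_ge0 // mulr_ge0 // ltW.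
rewrite !xln1xE // !mul_ln_divE //; first by rewrite /m; ring.
- by move=> z_gt0; rewrite ltr_pwDr ?mulr_gt0 // mulr_ge0 // ltW.
- by move=> y_gt0; rewrite ltr_pwDl ?mulr_gt0 // mulr_ge0 // ltW.
Qed.

Lemma sum_xln1x_strongly_concave (I : finType) (y z : I -> R) (lam : R) : 0 < lam < 1 ->
  (forall i, 0 <= y i) -> (forall i, 0 <= z i) -> \sum_i y i = 1 -> \sum_i z i = 1 ->
  lam * (1 - lam) / 2 * (\sum_i `|y i - z i|) ^+ 2 <=
  \sum_i xln1x (lam * y i + (1 - lam) * z i) - lam * \sum_i xln1x (y i)
    - (1 - lam) * \sum_i xln1x (z i).
Proof.
move=> lam01 y0 z0 Sy Sz; have /andP[lam0 lam1] := lam01.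
have lam1' : 0 < 1 - lam by rewrite subr_gt0.
pose m i := lam * y i + (1 - lam) * z i.
have m0 i : 0 <= m i by rewrite addr_ge0 // mulr_ge0 // ltW.
have Sm : \sum_i m i = 1.
  by rewrite big_split /= -!mulr_sumr Sy Sz !mulr1 subrKC.
have y_dom_m i : 0 < y i -> 0 < m i.
  by move=> y_gt0; rewrite ltr_pwDl ?mulr_gt0 // mulr_ge0 // ltW.
have z_dom_m i : 0 < z i -> 0 < m i.
  by move=> z_gt0; rewrite ltr_pwDr ?mulr_gt0 // mulr_ge0 // ltW.
have := pinsker y0 m0 y_dom_m Sy Sm; have := pinsker z0 m0 z_dom_m Sz Sm.
have -> : \sum_i `|y i - m i| = (1 - lam) * \sum_i `|y i - z i|.
  rewrite mulr_sumr; apply: eq_bigr => i _.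
  by rewrite -[X in X * _]ger0_norm ?ltW // -normrM; congr `|_|; rewrite /m; ring.
have -> : \sum_i `|z i - m i| = lam * \sum_i `|y i - z i|.
  rewrite mulr_sumr; apply: eq_bigr => i _.
  by rewrite -[X in X * _]ger0_norm ?ltW // -normrM distrC; congr `|_|; rewrite /m; ring.
rewrite !mulr_sumr -!sumrB (eq_bigr _ (fun i _ => xln1x_mix_gap lam01 (y0 i) (z0 i))).
rewrite big_split /= -!mulr_sumr -/m.
set S := \sum_i `|y i - z i|; set Ky := \sum_i y i * _; set Kz := \sum_i z i * _.
move=> Kz_ge Ky_ge.
have := ler_wpM2l (ltW lam0) Ky_ge; have := ler_wpM2l (ltW lam1') Kz_ge.
rewrite (_ : lam * (1 - lam) / 2 * S ^+ 2
  = lam * (((1 - lam) * S) ^+ 2 / 2) + (1 - lam) * ((lam * S) ^+ 2 / 2)); first by lra.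
by field.
Qed.

Lemma xln1x_ge0 (x : R) : 0 <= x <= 1 -> 0 <= xln1x x.
Proof. by case/andP=> x0 x1; rewrite xln1xE // oppr_ge0 mulr_ge0_le0 // ln_le0. Qed.

Lemma xln1x_le_tangent (x c : R) : 0 <= x -> 0 < c -> xln1x x <= c^-1 + x * (ln c - 1).
Proof.
move=> x0 c0; have [->|x_neq0] := eqVneq x 0.
  by rewrite xln1xE // mul0r oppr0 mul0r addr0 invr_ge0 ltW.
have xc0 : 0 < x * c by rewrite mulr_gt0 // lt_def x_neq0.
have x_gt0 : 0 < x by rewrite lt_def x_neq0.
have := @ln_le_subr1 R (x * c)^-1; rewrite invr_gt0 lnV ?posrE // lnM ?posrE // => /(_ xc0).
rewrite -(ler_pM2l x_gt0) mulrBr mulr1 invfM mulrA divff ?mulr1 // xln1xE //.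
lra.
Qed.

Definition subprob {d} (v : 'cV[R]_d) := (forall i, 0 <= v i 0) /\ \sum_i v i 0 <= 1.

Definition augment {d} (v : 'cV[R]_d) (i : 'I_d.+1) : R :=
  if unlift ord0 i is Some j then v j 0 else 1 - \sum_j v j 0.

Lemma sum_augment2 d (F : R -> R -> R) (v w : 'cV[R]_d) :
  \sum_i F (augment v i) (augment w i)
  = F (1 - \sum_j v j 0) (1 - \sum_j w j 0) + \sum_j F (v j 0) (w j 0).
Proof.
rewrite big_ord_recl /augment unlift_none; congr (_ + _).
by apply: eq_bigr => j _; rewrite liftK.
Qed.

Lemma Ent_augment d (v : 'cV[R]_d) : Ent v = \sum_i xln1x (augment v i).
Proof. by rewrite (sum_augment2 (fun x _ => xln1x x) v v). Qed.

Lemma augment_ge0 d (v : 'cV[R]_d) : subprob v -> forall i, 0 <= augment v i.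
Proof. by case=> v0 v1 i; rewrite /augment; case: unlift => [j|] //; rewrite subr_ge0. Qed.

Lemma sum_augment d (v : 'cV[R]_d) : \sum_i augment v i = 1.
Proof. by rewrite (sum_augment2 (fun x _ => x) v v) subrK. Qed.

Lemma Ent_strongly_concave d (v w : 'cV[R]_d) (lam : R) : 0 < lam < 1 ->
  subprob v -> subprob w ->
  lam * (1 - lam) / 2 * norm1 (v - w) ^+ 2 <=
  Ent (lam *: v + (1 - lam) *: w) - lam * Ent v - (1 - lam) * Ent w.
Proof.
move=> lam01 v_sub w_sub; have /andP[lam0 lam1] := lam01.
have := sum_xln1x_strongly_concave lam01 (augment_ge0 v_sub) (augment_ge0 w_sub)
  (sum_augment v) (sum_augment w).
rewrite !Ent_augment (_ : \sum_i xln1x (augment (lam *: v + (1 - lam) *: w) i)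
  = \sum_i xln1x (lam * augment v i + (1 - lam) * augment w i)); last first.
  rewrite -Ent_augment (sum_augment2 (fun x y => xln1x (lam * x + (1 - lam) * y))).
  congr (xln1x _ + _); last by apply: eq_bigr => j _; rewrite !mxE.
  rewrite (eq_bigr (fun j => lam * v j 0 + (1 - lam) * w j 0)) => [|j _]; last by rewrite !mxE.
  by rewrite big_split /= -!mulr_sumr; ring.
apply: le_trans; apply: ler_wpM2l; first by rewrite divr_ge0 ?mulr_ge0 ?subr_ge0 ?ltW.
apply: lerXn2r; rewrite ?nnegrE ?sumr_ge0 //.
rewrite (sum_augment2 (fun x y => `|x - y|)) /norm1 ler_wpDl //.
by apply: ler_sum => j _; rewrite !mxE.
Qed.

Lemma augment_le1 d (v : 'cV[R]_d) : subprob v -> forall i, augment v i <= 1.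
Proof.
move=> v_sub i; rewrite -(sum_augment v) (bigD1 i) //= lerDl.
by rewrite sumr_ge0 // => j _; apply: augment_ge0.
Qed.

Lemma Ent_ge0 d (v : 'cV[R]_d) : subprob v -> 0 <= Ent v.
Proof.
move=> v_sub; rewrite Ent_augment sumr_ge0 // => i _.
by rewrite xln1x_ge0 // augment_ge0 // augment_le1.
Qed.

Lemma Ent_le_ln d (v : 'cV[R]_d) : subprob v -> Ent v <= ln d.+1%:R.
Proof.
move=> v_sub; have d1_gt0 : 0 < d.+1%:R :> R by rewrite ltr0n.
rewrite Ent_augment.
apply: le_trans (_ : \sum_i (d.+1%:R^-1 + augment v i * (ln d.+1%:R - 1)) <= _).
  by apply: ler_sum => i _; rewrite xln1x_le_tangent ?augment_ge0.
rewrite big_split /= -mulr_suml sum_augment mul1r sumr_const card_ord.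
by rewrite -[X in X + _]mulr_natr mulVf ?gt_eqF // addrC subrK.
Qed.
End Entropy.

Section Domain.
Variables (R : realType) (d H : nat).
Implicit Types (x y z : mdpoint R d H) (a b lam : R).

Lemma inX_subprob a b z : b <= 1 -> inX a b z ->
  subprob z.1 /\ forall h j, subprob (col j (z.2 h)).
Proof.
move=> b1 [a' [/andP[_ a'b] [[p0 pS] M_st]]]; split; first by rewrite /subprob pS (le_trans a'b).
by move=> h j; have [c0 cS] := M_st h j; rewrite /subprob cS (le_trans a'b).
Qed.

Lemma snd_comb x y lam mu h : (lam *: x + mu *: y).2 h = lam *: x.2 h + mu *: y.2 h.
Proof. by rewrite /= !ffunE. Qed.

Lemma snd_sub x y h : (x - y).2 h = x.2 h - y.2 h.
Proof. by rewrite /= !ffunE. Qed.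

Lemma col_comb (A B : 'M[R]_d) lam mu j :
  col j (lam *: A + mu *: B) = lam *: col j A + mu *: col j B.
Proof. by apply/matrixP => i k; rewrite !mxE. Qed.

Lemma in_sdelta_comb (u v : 'cV[R]_d) (a1 a2 lam : R) : in_sdelta a1 u -> in_sdelta a2 v ->
  0 <= lam <= 1 -> in_sdelta (lam * a1 + (1 - lam) * a2) (lam *: u + (1 - lam) *: v).
Proof.
move=> [u0 uS] [v0 vS] /andP[lam0 lam1]; have lam1' : 0 <= 1 - lam by rewrite subr_ge0.
split=> [i|]; first by rewrite !mxE addr_ge0 // mulr_ge0.
rewrite (eq_bigr (fun i => lam * u i 0 + (1 - lam) * v i 0)) => [|i _]; last by rewrite !mxE.
by rewrite big_split /= -!mulr_sumr uS vS.
Qed.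

Lemma inX_convex a b x y lam : inX a b x -> inX a b y -> 0 <= lam <= 1 ->
  inX a b (lam *: x + (1 - lam) *: y).
Proof.
move=> [a1 [a1_ab [p1 M1]]] [a2 [a2_ab [p2 M2]]] lam01.
exists (lam * a1 + (1 - lam) * a2); split; last split.
- have /andP[lam0 lam1] := lam01; move: a1_ab a2_ab => /andP[? ?] /andP[? ?].
  by apply/andP; split; nra.
- exact: in_sdelta_comb.
- by move=> h j; rewrite snd_comb col_comb; apply: in_sdelta_comb; [apply: M1|apply: M2|].
Qed.

Lemma sqr_normdH z :
  normdH z ^+ 2 = norm1 z.1 ^+ 2 + \sum_(h < H) \sum_(j < d) norm1 (col j (z.2 h)) ^+ 2.
Proof.
rewrite sqr_sqrtr // addr_ge0 ?sqr_ge0 // sumr_ge0 // => h _.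
by rewrite sumr_ge0 // => j _; rewrite sqr_ge0.
Qed.

Lemma RdH_strongly_convex a b x y lam : b <= 1 -> inX a b x -> inX a b y -> 0 < lam < 1 ->
  RdH (lam *: x + (1 - lam) *: y)
  <= lam * RdH x + (1 - lam) * RdH y - lam * (1 - lam) / 2 * normdH (x - y) ^+ 2.
Proof.
move=> b1 Xx Xy lam01.
have [x1 x2] := inX_subprob b1 Xx; have [y1 y2] := inX_subprob b1 Xy.
pose gap (v w : 'cV[R]_d) := Ent (lam *: v + (1 - lam) *: w) - lam * Ent v - (1 - lam) * Ent w.
have gapE : lam * RdH x + (1 - lam) * RdH y - RdH (lam *: x + (1 - lam) *: y)
    = gap x.1 y.1 + \sum_(h < H) \sum_(j < d) gap (col j (x.2 h)) (col j (y.2 h)).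
  have -> : \sum_(h < H) \sum_(j < d) gap (col j (x.2 h)) (col j (y.2 h))
      = \sum_(h < H) \sum_(j < d) Ent (col j ((lam *: x + (1 - lam) *: y).2 h))
        - lam * \sum_(h < H) \sum_(j < d) Ent (col j (x.2 h))
        - (1 - lam) * \sum_(h < H) \sum_(j < d) Ent (col j (y.2 h)).
    rewrite !mulr_sumr -!sumrB; apply: eq_bigr => h _.
    by rewrite !mulr_sumr -!sumrB; apply: eq_bigr => j _; rewrite snd_comb col_comb.
  by rewrite /RdH /gap /=; ring.
rewrite lerBrDr addrC -lerBrDr gapE sqr_normdH mulrDr.
apply: lerD; first exact: Ent_strongly_concave lam01 x1 y1.
rewrite mulr_sumr; apply: ler_sum => h _; rewrite mulr_sumr; apply: ler_sum => j _.
by rewrite snd_sub linearB; apply: Ent_strongly_concave lam01 (x2 h j) (y2 h j).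
Qed.

Lemma RdH_le0 a b z : b <= 1 -> inX a b z -> RdH z <= 0.
Proof.
move=> b1 /(inX_subprob b1) [z1 z2]; rewrite /RdH -opprD oppr_le0 addr_ge0 ?Ent_ge0 //.
by rewrite !sumr_ge0 // => h _; rewrite sumr_ge0 // => j _; rewrite Ent_ge0.
Qed.

Lemma RdH_ge a b z : b <= 1 -> inX a b z -> - ((1 + H%:R * d%:R) * ln d.+1%:R) <= RdH z.
Proof.
move=> b1 /(inX_subprob b1) [z1 z2]; rewrite /RdH -opprD lerN2 mulrDl mul1r.
apply: lerD; first exact: Ent_le_ln.
rewrite (_ : _ * ln _ = \sum_(h < H) \sum_(j < d) ln d.+1%:R); last first.
  by rewrite !sumr_const !card_ord -mulrnA -natrM mulr_natl mulnC.
by apply: ler_sum => h _; apply: ler_sum => j _; apply: Ent_le_ln.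
Qed.

Lemma norm1_ge0 (v : 'cV[R]_d) : 0 <= norm1 v.
Proof. exact: sumr_ge0. Qed.

Lemma norm1N (v : 'cV[R]_d) : norm1 (- v) = norm1 v.
Proof. by apply: eq_bigr => i _; rewrite mxE normrN. Qed.

Lemma normdHN z : normdH (- z) = normdH z.
Proof.
rewrite /normdH norm1N; congr (Num.sqrt (_ + _)).
by apply: eq_bigr => h _; apply: eq_bigr => j _; rewrite /= ffunE linearN norm1N.
Qed.

Lemma normdH_distC x y : normdH (x - y) = normdH (y - x).
Proof. by rewrite -normdHN opprB. Qed.

Lemma ler_normdH z r : 0 <= r -> r ^+ 2 <= normdH z ^+ 2 -> r <= normdH z.
Proof. by move=> r0; rewrite ler_sqr ?nnegrE ?sqrtr_ge0. Qed.

Lemma norm1_fst_le_normdH z : norm1 z.1 <= normdH z.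
Proof.
rewrite ler_normdH ?norm1_ge0 // sqr_normdH lerDl.
by rewrite sumr_ge0 // => h _; rewrite sumr_ge0 // => j _; rewrite sqr_ge0.
Qed.

Lemma norm1_col_le_normdH z h j : norm1 (col j (z.2 h)) <= normdH z.
Proof.
have sqr_sum_ge0 h' : 0 <= \sum_(j' < d) norm1 (col j' (z.2 h')) ^+ 2.
  by rewrite sumr_ge0 // => j' _; rewrite sqr_ge0.
rewrite ler_normdH ?norm1_ge0 // sqr_normdH ler_wpDl ?sqr_ge0 //.
rewrite (bigD1 h) //= ler_wpDr ?sumr_ge0 // (bigD1 j) //= ler_wpDr //.
by rewrite sumr_ge0 // => j' _; rewrite sqr_ge0.
Qed.

Lemma opnorm11_le (M : 'M[R]_d) (r : R) : 0 <= r -> (forall j, norm1 (col j M) <= r) ->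
  opnorm11 M <= r.
Proof.
move=> r0 col_le; rewrite /opnorm11.
set S := (X in sup X).
have [[s Ss]|S0] := pselect (exists s, S s); last first.
  by rewrite (_ : S = set0) ?sup0 // -subset0 => s Ss; apply: S0; exists s.
apply: ge_sup; first by exists s.
move=> _ [u [u1 ->]]; rewrite -[r]mulr1 -u1 /norm1 mulr_sumr.
apply: le_trans (_ : \sum_i \sum_j `|M i j| * `|u j 0| <= _).
  apply: ler_sum => i _; rewrite mxE (le_trans (ler_norm_sum _ _ _)) //.
  by apply: ler_sum => j _; rewrite normrM.
rewrite exchange_big /=; apply: ler_sum => j _; rewrite -mulr_suml ler_wpM2r //.
by apply: le_trans (col_le j); apply: ler_sum => i _; rewrite mxE.
Qed.

Lemma opnorm11_le_normdH z h : opnorm11 (z.2 h) <= normdH z.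
Proof. by apply: opnorm11_le; [exact: sqrtr_ge0 | exact: norm1_col_le_normdH]. Qed.
End Domain.

Section InnerProduct.
Variables (R : realType) (d H : nat).
Implicit Types (x y g : mdpoint R d H) (lam : R).

Lemma dotpC x y : dotp x y = dotp y x.
Proof.
rewrite /dotp; congr (_ + _); first by apply: eq_bigr => i _; rewrite mulrC.
by apply: eq_bigr => h _; apply: eq_bigr => i _; apply: eq_bigr => j _; rewrite mulrC.
Qed.

Lemma dotpDl x y g : dotp (x + y) g = dotp x g + dotp y g.
Proof.
rewrite /dotp addrACA; congr (_ + _); rewrite -big_split; apply: eq_bigr => h _.
  by rewrite mxE mulrDl.
rewrite -big_split; apply: eq_bigr => i _; rewrite -big_split; apply: eq_bigr => j _.
by rewrite /= ffunE mxE mulrDl.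
Qed.

Lemma dotpZl lam x g : dotp (lam *: x) g = lam * dotp x g.
Proof.
rewrite /dotp mulrDr !mulr_sumr; congr (_ + _); apply: eq_bigr => h _.
  by rewrite mxE mulrA.
rewrite mulr_sumr; apply: eq_bigr => i _; rewrite mulr_sumr; apply: eq_bigr => j _.
by rewrite /= ffunE mxE mulrA.
Qed.

Lemma dotpBl x y g : dotp (x - y) g = dotp x g - dotp y g.
Proof. by rewrite dotpDl -scaleN1r dotpZl mulN1r. Qed.

Lemma dotpBr g x y : dotp g (x - y) = dotp g x - dotp g y.
Proof. by rewrite dotpC dotpBl !(dotpC g). Qed.
End InnerProduct.

Lemma le_of_1mM_le (R : realFieldType) (K G : R) : 0 <= K ->
  (forall lam, 0 < lam < 1 -> (1 - lam) * K <= G) -> K <= G.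
Proof.
move=> K0 KG; rewrite leNgt; apply/negP => GK.
have G0 : 0 <= G.
  have := KG 2^-1; lra.
have K_gt0 : 0 < K by exact: le_lt_trans GK.
have lam01 : 0 < (K - G) / (2 * K) < 1.
  by rewrite divr_gt0 ?subr_gt0 ?mulr_gt0 //= ltr_pdivrMr ?mulr_gt0 //; lra.
have := KG _ lam01; rewrite (_ : (1 - _) * K = (K + G) / 2); first lra.
by field; rewrite gt_eqF.
Qed.

Section LazyMirrorDescent.
Variables (R : realType) (d H : nat) (a b eta L : R) (T : nat) (g z : nat -> mdpoint R d H).
Hypotheses (b_le1 : b <= 1) (eta_gt0 : 0 < eta) (L_ge0 : 0 <= L).
Hypothesis lmd : lazy_md a b eta T g z.
Hypothesis g_dual : forall t, (1 <= t <= T)%N -> dual_bound L (g t).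
Implicit Types (x y : mdpoint R d H) (lam : R).

Definition lmd_obj t y := \sum_(1 <= s < t) dotp y (g s) + eta^-1 * RdH y.

Lemma lmd_obj_succ t y : (1 <= t)%N -> lmd_obj t.+1 y = lmd_obj t y + dotp y (g t).
Proof. by move=> t1; rewrite /lmd_obj big_nat_recr //= addrAC. Qed.

Lemma lmd_obj_strongly_convex t x y lam : inX a b x -> inX a b y -> 0 < lam < 1 ->
  lmd_obj t (lam *: x + (1 - lam) *: y) <= lam * lmd_obj t x + (1 - lam) * lmd_obj t y
    - lam * (1 - lam) / (2 * eta) * normdH (x - y) ^+ 2.
Proof.
move=> Xx Xy lam01.
have etaV_ge0 : 0 <= eta^-1 by rewrite invr_ge0 ltW.
have := ler_wpM2l etaV_ge0 (RdH_strongly_convex b_le1 Xx Xy lam01).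
rewrite /lmd_obj (_ : \sum_(1 <= s < t) _ = lam * \sum_(1 <= s < t) dotp x (g s)
  + (1 - lam) * \sum_(1 <= s < t) dotp y (g s)); last first.
  by rewrite !mulr_sumr -big_split; apply: eq_bigr => s _; rewrite dotpDl !dotpZl.
move: (RdH _) (RdH x) (RdH y) (normdH _) (\sum_(_ <= _ < _) _) (\sum_(_ <= _ < _) _).
move=> r rx ry n sx sy; rewrite -subr_ge0 => ineq; rewrite -subr_ge0.
by rewrite (_ : _ - _ = eta^-1 * (lam * rx + (1 - lam) * ry - lam * (1 - lam) / 2 * n ^+ 2)
  - eta^-1 * r) //; field; rewrite gt_eqF.
Qed.

Lemma lmd_quadratic_growth t y : (1 <= t <= T)%N -> inX a b y ->
  lmd_obj t (z t) + normdH (y - z t) ^+ 2 / (2 * eta) <= lmd_obj t y.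
Proof.
move=> tT Xy; have [Xz z_min] := lmd tT.
rewrite addrC -lerBrDr; apply: le_of_1mM_le => [|lam lam01].
  by rewrite divr_ge0 ?sqr_ge0 // mulr_ge0 // ltW.
have /andP[lam0 lam1] := lam01.
have Xw : inX a b (lam *: y + (1 - lam) *: z t).
  by apply: inX_convex => //; rewrite (ltW lam0) (ltW lam1).
have : lmd_obj t (z t) <= lmd_obj t (lam *: y + (1 - lam) *: z t) := z_min _ Xw.
have := lmd_obj_strongly_convex t Xy Xz lam01.
move: (lmd_obj t _) (lmd_obj t y) (lmd_obj t (z t)) (normdH _) => fw fy fz n.
by move=> ? ?; rewrite -(ler_pM2l lam0); lra.
Qed.

Lemma lmd_step t y : (1 <= t <= T)%N -> inX a b y ->
  dotp (z t) (g t) + lmd_obj t (z t) <= lmd_obj t.+1 y + eta * L ^+ 2 / 2.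
Proof.
move=> tT Xy; have t1 : (1 <= t)%N by case/andP: tT.
have := lmd_quadratic_growth tT Xy; have := g_dual tT (z t - y).
rewrite lmd_obj_succ // dotpBr -normdHN opprB [dotp y _]dotpC [dotp (z t) _]dotpC.
have amgm n : L * n - n ^+ 2 / (2 * eta) <= eta * L ^+ 2 / 2.
  rewrite -subr_ge0 (_ : _ - _ = (n - eta * L) ^+ 2 / (2 * eta)).
    by rewrite divr_ge0 ?sqr_ge0 // mulr_ge0 // ltW.
  by field; rewrite gt_eqF.
have := amgm (normdH (y - z t)).
move: (normdH _) (lmd_obj t _) (lmd_obj t y) (dotp (g t) _) (dotp (g t) y) => n fz fy gz gy.
lra.
Qed.

Lemma lmd_telescope k y : (1 <= T)%N -> (k <= T)%N -> inX a b y ->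
  \sum_(1 <= t < k.+1) dotp (z t) (g t) + lmd_obj 1 (z 1)
  <= lmd_obj k.+1 y + k%:R * (eta * L ^+ 2 / 2).
Proof.
move=> T1; elim: k y => [|k IHk] y kT Xy.
  by rewrite big_geq // add0r mul0r addr0; have [_] := lmd (T1 : (1 <= 1 <= T)%N); apply.
have k1T : (1 <= k.+1 <= T)%N by [].
have [Xz _] := lmd k1T.
rewrite big_nat_recr //= -natr1.
have := IHk _ (ltnW kT) Xz; have := lmd_step k1T Xy.
move: (\sum_(_ <= _ < _) _) (lmd_obj 1 _) (lmd_obj k.+1 _) (lmd_obj k.+2 y) (dotp _ _).
move=> s f1 fk fk2 gk; lra.
Qed.

Lemma lmd_stable t : (1 <= t < T)%N -> normdH (z t - z t.+1) <= eta * L.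
Proof.
case/andP=> t1 tT; have tT' : (1 <= t <= T)%N by rewrite t1 ltnW.
have t1T : (1 <= t.+1 <= T)%N by [].
have [Xz _] := lmd tT'; have [Xz1 _] := lmd t1T.
have := lmd_quadratic_growth tT' Xz1; have := lmd_quadratic_growth t1T Xz.
rewrite !lmd_obj_succ // [normdH (z t.+1 - z t)]normdH_distC.
have := g_dual tT' (z t - z t.+1); rewrite dotpBr [dotp (z t) _]dotpC [dotp (z t.+1) _]dotpC.
have etaL_ge0 : 0 <= eta * L by rewrite mulr_ge0 // ltW.
move: (normdH _) (lmd_obj t _) (lmd_obj t _) (dotp (g t) _) (dotp (g t) _).
move=> n f f1 gz gz1 gap_le growth1 growth.
have : n ^+ 2 / (2 * eta) + n ^+ 2 / (2 * eta) <= L * n by lra.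
rewrite (_ : _ + _ = n ^+ 2 / eta); last by field; rewrite gt_eqF.
rewrite ler_pdivrMr // [L * n * eta]mulrAC [L * eta]mulrC.
move: (eta * L) etaL_ge0 => c c_ge0; nra.
Qed.

Lemma lmd_linear_regret u : (1 <= T)%N -> inX a b u ->
  \sum_(1 <= t < T.+1) (dotp (z t) (g t) - dotp u (g t))
  <= eta^-1 * ((1 + H%:R * d%:R) * ln d.+1%:R) + T%:R * (eta * L ^+ 2 / 2).
Proof.
move=> T1 Xu; have [Xz1 _] := lmd (T1 : (1 <= 1 <= T)%N).
have := lmd_telescope T1 (leqnn T) Xu.
have etaV_ge0 : 0 <= eta^-1 by rewrite invr_ge0 ltW.
have := ler_wpM2l etaV_ge0 (RdH_le0 b_le1 Xu).
have := ler_wpM2l etaV_ge0 (RdH_ge b_le1 Xz1).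
rewrite /lmd_obj [\sum_(1 <= s < 1) _]big_geq // add0r sumrB mulr0 mulrN.
move: (eta^-1 * _) (eta^-1 * RdH u) (eta^-1 * RdH (z 1)).
move: (\sum_(_ <= _ < _) _) (\sum_(_ <= _ < _) _).
move=> sz su K ru r1; lra.
Qed.
End LazyMirrorDescent.

Lemma regret_le_linearized (R : realType) (d H : nat) (a b : R) (T : nat)
    (ell : nat -> mdpoint R d H -> R) (g z : nat -> mdpoint R d H) (u : mdpoint R d H) :
  (forall t, (1 <= t <= T)%N -> subgrad_on a b (ell t) (z t) (g t)) -> inX a b u ->
  \sum_(1 <= t < T.+1) ell t (z t) - \sum_(1 <= t < T.+1) ell t u
  <= \sum_(1 <= t < T.+1) (dotp (z t) (g t) - dotp u (g t)).
Proof.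
move=> subgrad Xu; rewrite -sumrB; apply: ler_sum_nat => t tT.
by have := subgrad t tT u Xu; rewrite dotpBr (dotpC (g t)) (dotpC (g t)); lra.
Qed.

Lemma regularizer_range_le (R : realType) (d H : nat) : (2 <= d)%N -> (1 <= H)%N ->
  (1 + H%:R * d%:R) * ln d.+1%:R <= 4 * (d%:R * H%:R * ln d%:R) :> R.
Proof.
move=> d2 H1; have d_gt0 : (0 < d)%N by apply: leq_trans d2.
have Hd1 : 1 <= H%:R * d%:R :> R by rewrite -natrM ler1n muln_gt0 H1.
have ln_d1 : ln d.+1%:R <= 2 * ln d%:R :> R.
  rewrite mulr_natl -lnXn ?ltr0n // ler_ln ?posrE ?exprn_gt0 ?ltr0n // -natrX ler_nat.
  by rewrite -mulnn; nia.
rewrite (_ : 4 * _ = (2 * (H%:R * d%:R)) * (2 * ln d%:R)); last ring.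
by apply: ler_pM ln_d1; rewrite ?addr_ge0 ?ln_ge0 ?ler1n //; lra.
Qed.

Lemma tuned_regret_le (R : realFieldType) (K S tau L : R) :
  0 < S -> 0 < tau -> 0 < L -> K <= 2 * S ^+ 2 ->
  (S / (L * tau))^-1 * K + tau ^+ 2 * (S / (L * tau) * L ^+ 2 / 2) <= L * (4 * S * tau).
Proof.
move=> S_gt0 tau_gt0 L_gt0 K_le; rewrite invf_div.
rewrite (_ : tau ^+ 2 * _ = L * S * tau / 2); last by field; rewrite !gt_eqF.
have : L * tau / S * K <= L * tau / S * (2 * S ^+ 2).
  by rewrite ler_wpM2l // divr_ge0 ?mulr_ge0 ?ltW.
rewrite (_ : _ * (2 * S ^+ 2) = 2 * (L * S * tau)); last by field; rewrite gt_eqF.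
have : 0 <= L * S * tau by rewrite !mulr_ge0 ?ltW.
lra.
Qed.

Theorem corollary1 (R : realType) (d H T : nat) (a b L : R)
  (ell : nat -> mdpoint R d H -> R) (g z : nat -> mdpoint R d H) :
  (2 <= d)%N -> (1 <= H)%N -> (1 <= T)%N ->
  0 <= a -> a <= b -> b <= 1 -> 0 < L ->
  (forall t, (1 <= t <= T)%N -> convex_on a b (ell t)) ->
  (forall t, (1 <= t <= T)%N -> lipschitz_on a b L (ell t)) ->
  (forall t, (1 <= t <= T)%N -> subgrad_on a b (ell t) (z t) (g t) /\ dual_bound L (g t)) ->
  lazy_md a b (Num.sqrt (2 * d%:R * H%:R * ln d%:R) / (L * Num.sqrt T%:R)) T g z ->
  (forall u, inX a b u ->
     \sum_(1 <= t < T.+1) ell t (z t) - \sum_(1 <= t < T.+1) ell t u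
     <= L * Num.sqrt (32 * d%:R * H%:R * ln d%:R * T%:R)) /\
  (forall t, (1 <= t < T)%N ->
     norm1 ((z t).1 - (z t.+1).1)
       <= Num.sqrt (2 * d%:R * H%:R * ln d%:R) / Num.sqrt T%:R /\
     forall h : 'I_H,
       opnorm11 ((z t).2 h - (z t.+1).2 h)
         <= Num.sqrt (2 * d%:R * H%:R * ln d%:R) / Num.sqrt T%:R).
Proof.
move=> d2 H1 T1 _ _ b1 L_gt0 _ _ subgrad_dual lmd.
set S := Num.sqrt _ in lmd *; set tau := Num.sqrt T%:R in lmd *.
have lnd_gt0 : 0 < ln d%:R :> R by rewrite ln_gt0 // ltr1n.
have S2_gt0 : 0 < 2 * d%:R * H%:R * ln d%:R :> R by rewrite !mulr_gt0 // ltr0n // ltnW.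
have S2 : S ^+ 2 = 2 * d%:R * H%:R * ln d%:R by rewrite sqr_sqrtr // ltW.
have S_gt0 : 0 < S by rewrite sqrtr_gt0.
have tau_gt0 : 0 < tau by rewrite sqrtr_gt0 ltr0n.
have eta_gt0 : 0 < S / (L * tau) by rewrite divr_gt0 ?mulr_gt0.
have g_dual t tT := (subgrad_dual t tT).2.
split=> [u Xu|t tT].
  apply: le_trans (regret_le_linearized (fun t tT => (subgrad_dual t tT).1) Xu) _.
  apply: le_trans (lmd_linear_regret b1 eta_gt0 lmd g_dual T1 Xu) _.
  rewrite (_ : 32 * d%:R * H%:R * ln d%:R * T%:R = (4 * S * tau) ^+ 2); last first.
    by rewrite !exprMn S2 sqr_sqrtr ?ler0n //; ring.
  rewrite sqrtr_sqr ger0_norm; last by rewrite !mulr_ge0 // ltW.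
  rewrite -[T%:R]sqr_sqrtr ?ler0n // -/tau; apply: tuned_regret_le => //.
  by rewrite S2 (le_trans (regularizer_range_le _ d2 H1)) //; lra.
have := lmd_stable b1 eta_gt0 (ltW L_gt0) lmd g_dual tT.
rewrite (_ : _ * L = S / tau); last by field; rewrite !gt_eqF.
move=> stable; split=> [|h]; apply: le_trans stable.
  exact: (norm1_fst_le_normdH (z t - z t.+1)).
by rewrite -snd_sub opnorm11_le_normdH.
Qed.
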